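(* Assume Assumption A, let $\mathscr E$ be the union of the recurrent classes of the limiting chain $X_R$ and $\Delta=E\setminus\mathscr E$ its set of transient states. Then for every $\eta\in\Delta$, $$\lim_{t\to\infty}\limsup_{N\to\infty}\mathbb P_\eta\big[H_{\mathscr E}\ge t\,\alpha_N\big]=0.$$
   Context: Setting: $E$ is a fixed finite set; for each $N\ge1$, $(\eta^N_t)$ is a continuous-time irreducible Markov chain on $E$ with jump rates $R_N(\eta,\xi)$; $\mathbb P_\eta$ is its law started at $\eta$ and $H_A=\inf\{t>0:\eta^N_t\in A\}$. Ordered families: a finite family of sequences of positive reals $(a^r_N)$, $r\in\mathfrak R$, is ordered if for all $r\neq s$, $\arctan(a^r_N/a^s_N)$ converges. Assumption A: (i) for each $\eta\neq\xi$, either $R_N(\eta,\xi)=0$ for all $N$ or $R_N(\eta,\xi)>0$ for all $N$; let $\mathbb B$ be the set of pairs with positive rates. (ii) For every $m\ge1$ the family $\prod_{(\eta,\xi)\in\mathbb B}R_N(\eta,\xi)^{k(\eta,\xi)}$, $k:\mathbb B\to\mathbb Z_+$ with $\sum k=m$, is ordered. Limiting chain: $\alpha_N^{-1}=\sum_\eta\sum_{\xi\ne\eta}R_N(\eta,\xi)$; $R(\eta,\xi)=\lim_N\alpha_NR_N(\eta,\xi)\in[0,1]$ (exists under Assumption A); $X_R$ is the Markov chain on $E$ with rates $R$. *)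

(* classical reals. Finite state space E given by a complete,
   duplicate-free enumeration. *)
From Stdlib Require Import Reals Lra List Classical ClassicalEpsilon Relations Arith Factorial.
Open Scope R_scope.

Definition dec (P : Prop) : {P} + {~ P} := excluded_middle_informative P.

Definition sumL {E : Type} (l : list E) (f : E -> R) : R :=
  fold_right (fun x acc => f x + acc) 0 l.
Definition prodL {E : Type} (l : list E) (f : E -> R) : R :=
  fold_right (fun x acc => f x * acc) 1 l.
Definition sumN {E : Type} (l : list E) (f : E -> nat) : nat :=
  fold_right (fun x acc => (f x + acc)%nat) 0%nat l.

Definition off_sum {E : Type} (l : list E) (eta : E) (f : E -> R) : R :=
  sumL l (fun xi => if dec (xi = eta) then 0 else f xi).

Definition total_rate {E : Type} (l : list E) (Rt : E -> E -> R) : R :=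
  sumL l (fun eta => off_sum l eta (Rt eta)).
Definition alpha {E : Type} (l : list E) (RN : nat -> E -> E -> R) (N : nat) : R :=
  / total_rate l (RN N).

Definition lim_seq (u : nat -> R) : R := epsilon (inhabits 0) (fun L => Un_cv u L).
Definition series (u : nat -> R) : R := lim_seq (fun n => sum_f_R0 u n).

Definition ordered_family {I : Type} (F : I -> Prop) (a : I -> nat -> R) : Prop :=
  forall r s, F r -> F s -> r <> s ->
    exists L, Un_cv (fun N => atan (a r N / a s N)) L.

(* k : B -> Z_+ encoded as a function on E x E supported in B, with sum k = m *)
Definition admissible {E : Type} (l : list E) (RN : nat -> E -> E -> R) (m : nat)
    (k : E -> E -> nat) : Prop :=
  (forall eta xi, k eta xi <> 0%nat -> eta <> xi /\ forall N, 0 < RN N eta xi) /\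
  sumN l (fun eta => sumN l (fun xi => if dec (xi = eta) then 0%nat else k eta xi)) = m.

Definition monomial {E : Type} (l : list E) (Rt : E -> E -> R) (k : E -> E -> nat) : R :=
  prodL l (fun eta => prodL l (fun xi =>
    if dec (xi = eta) then 1 else Rt eta xi ^ k eta xi)).

Definition assumptionA {E : Type} (l : list E) (RN : nat -> E -> E -> R) : Prop :=
  (forall eta xi, eta <> xi ->
     (forall N, RN N eta xi = 0) \/ (forall N, 0 < RN N eta xi)) /\
  (forall m, (1 <= m)%nat ->
     ordered_family (admissible l RN m) (fun k N => monomial l (RN N) k)).

Definition limit_rate {E : Type} (l : list E) (RN : nat -> E -> E -> R) : E -> E -> R :=
  fun eta xi => lim_seq (fun N => alpha l RN N * RN N eta xi).

Definition edge {E : Type} (Rt : E -> E -> R) : relation E :=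
  fun eta xi => eta <> xi /\ 0 < Rt eta xi.
Definition reach {E : Type} (Rt : E -> E -> R) : relation E :=
  clos_refl_trans E (edge Rt).
Definition irreducible {E : Type} (Rt : E -> E -> R) : Prop :=
  forall x y, reach Rt x y.
(* x is recurrent for the finite chain with rates Rt: its communicating class
   is closed. The set of such x is the union of the recurrent classes. *)
Definition recurrent {E : Type} (Rt : E -> E -> R) (x : E) : Prop :=
  forall y, reach Rt x y -> reach Rt y x.

(* uniformized jump kernel at rate 1/a (a = alpha_N): P = I + a L *)
Definition unif_kernel {E : Type} (l : list E) (a : R) (Rt : E -> E -> R)
    (eta xi : E) : R :=
  if dec (xi = eta) then 1 - a * off_sum l eta (Rt eta) else a * Rt eta xi.

(* probability that the uniformized discrete chain Y started at eta has
   Y_1, ..., Y_k all outside A *)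
Fixpoint avoid {E : Type} (l : list E) (a : R) (Rt : E -> E -> R) (A : E -> Prop)
    (k : nat) (eta : E) : R :=
  match k with
  | O => 1
  | S k' => sumL l (fun xi => unif_kernel l a Rt eta xi *
                              (if dec (A xi) then 0 else avoid l a Rt A k' xi))
  end.

(* P_eta[H_A >= s] for the chain with rates Rt, eta not in A, s >= 0,
   via uniformization with a Poisson clock of rate 1/a (a = alpha_N):
   sum_k e^{-s/a} (s/a)^k / k! * P_eta[Y_1..Y_k not in A]. *)
Definition hit_tail {E : Type} (l : list E) (a : R) (Rt : E -> E -> R)
    (A : E -> Prop) (eta : E) (s : R) : R :=
  series (fun k => exp (- (s / a)) * (s / a) ^ k / INR (fact k) * avoid l a Rt A k eta).

From Stdlib Require Import Reals List.
From Stdlib Require Import Lra Lia Arith Classical ClassicalEpsilon Relations.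
Open Scope R_scope.

(* Uniformize the chain at rate [1 / alpha_N]: the number of jumps of the skeleton chain
   before time [t alpha_N] is Poisson([t]), and the skeleton kernels [I + alpha_N L_N]
   converge entrywise to the skeleton kernel [I + L] of the limiting chain.  Convergence of
   [alpha_N R_N(x, y)] is where Assumption A enters: every ratio [R_N(a, b) / R_N(x, y)] has
   a limit in [0, +oo], hence so does their sum [1 / (alpha_N R_N(x, y))].  For the limiting
   skeleton, a transient state reaches a recurrent one within boundedly many steps with
   probability bounded below, so avoiding the recurrent states for [K] steps has geometrically
   small probability.  Fix [K] making it small; by convergence it stays small for the
   skeletons at large [N], while a Poisson([t]) variable is below [K] with probability at
   most [K^2 / t]. *)

Lemma fold_right_unit {E A : Type} (op : A -> A -> A) (e : A) (f : E -> A) (l : list E) :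
  (forall y, op e y = y) -> (forall x, In x l -> f x = e) ->
  fold_right (fun x acc => op (f x) acc) e l = e.
Proof.
  intros He; induction l as [|a l IH]; intros Hf; [reflexivity|]; simpl.
  rewrite (Hf a (or_introl eq_refl)), He.
  apply IH; intros x Hx; apply Hf; right; exact Hx.
Qed.

Lemma fold_right_single {E A : Type} (op : A -> A -> A) (e : A) (f : E -> A)
    (l : list E) (a : E) :
  (forall y, op e y = y) -> (forall y, op y e = y) -> NoDup l -> In a l ->
  (forall x, x <> a -> f x = e) ->
  fold_right (fun x acc => op (f x) acc) e l = f a.
Proof.
  intros Hl Hr Hnd Hin Hf; induction Hnd as [|b l Hb Hnd IH]; [destruct Hin|]; simpl.
  destruct Hin as [<-|Hin].
  - rewrite (fold_right_unit op e f l Hl); [apply Hr|].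
    intros x Hx; apply Hf; intros ->; contradiction.
  - rewrite (Hf b), Hl by (intros ->; contradiction). exact (IH Hin).
Qed.

Section ListSums.
Context {E : Type}.
Implicit Types (l : list E) (f g p : E -> R).

Lemma sumL_cons l a f : sumL (a :: l) f = f a + sumL l f.
Proof. reflexivity. Qed.

Lemma sumL_ext l f g : (forall x, f x = g x) -> sumL l f = sumL l g.
Proof. intros H; induction l; rewrite ?sumL_cons; [reflexivity|]. rewrite H, IHl; reflexivity. Qed.

Lemma sumL_le l f g : (forall x, f x <= g x) -> sumL l f <= sumL l g.
Proof. intros H; induction l; rewrite ?sumL_cons; [simpl; lra|]. specialize (H a); lra. Qed.

Lemma sumL_nonneg l f : (forall x, 0 <= f x) -> 0 <= sumL l f.
Proof. intros H; induction l; rewrite ?sumL_cons; [simpl; lra|]. specialize (H a); lra. Qed.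

Lemma sumL_plus l f g : sumL l (fun x => f x + g x) = sumL l f + sumL l g.
Proof. induction l; rewrite ?sumL_cons; [simpl; lra|]. rewrite IHl; ring. Qed.

Lemma sumL_mult_l l c f : c * sumL l f = sumL l (fun x => c * f x).
Proof. induction l; rewrite ?sumL_cons; [simpl; ring|]. rewrite <- IHl; ring. Qed.

Lemma sumL_term l f a : (forall x, 0 <= f x) -> In a l -> f a <= sumL l f.
Proof.
  intros H; induction l as [|b l IH]; intros Hin; [destruct Hin|]; rewrite sumL_cons.
  destruct Hin as [->|Hin].
  - pose proof (sumL_nonneg l f H); lra.
  - specialize (IH Hin); specialize (H b); lra.
Qed.

Lemma sumL_weighted_lt l p g y : In y l -> (forall x, 0 <= p x) -> (forall x, g x <= 1) ->
  0 < p y -> g y < 1 -> sumL l (fun x => p x * g x) < sumL l p.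
Proof.
  intros Hin Hp Hg Hpy Hgy.
  assert (Hsplit : sumL l (fun x => p x * g x) + sumL l (fun x => p x * (1 - g x)) = sumL l p).
  { rewrite <- sumL_plus; apply sumL_ext; intros x; ring. }
  assert (p y * (1 - g y) <= sumL l (fun x => p x * (1 - g x))).
  { apply (sumL_term l (fun x => p x * (1 - g x))); [|exact Hin].
    intros x; specialize (Hp x); specialize (Hg x); nra. }
  nra.
Qed.

Lemma sumL_single l f a : NoDup l -> In a l -> (forall x, x <> a -> f x = 0) -> sumL l f = f a.
Proof. exact (fold_right_single Rplus 0 f l a Rplus_0_l Rplus_0_r). Qed.

Lemma sumN_single l (f : E -> nat) a :
  NoDup l -> In a l -> (forall x, x <> a -> f x = 0%nat) -> sumN l f = f a.
Proof. exact (fold_right_single Nat.add 0%nat f l a Nat.add_0_l Nat.add_0_r). Qed.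

Lemma sumN_zero l (f : E -> nat) : (forall x, f x = 0%nat) -> sumN l f = 0%nat.
Proof. intros H; apply (fold_right_unit Nat.add 0%nat f l Nat.add_0_l); auto. Qed.

Lemma prodL_single l f a : NoDup l -> In a l -> (forall x, x <> a -> f x = 1) -> prodL l f = f a.
Proof. exact (fold_right_single Rmult 1 f l a Rmult_1_l Rmult_1_r). Qed.

Lemma prodL_one l f : (forall x, f x = 1) -> prodL l f = 1.
Proof. intros H; apply (fold_right_unit Rmult 1 f l Rmult_1_l); auto. Qed.

End ListSums.

(** * Limits in [0, +oo] *)

Lemma Un_cv_const c : Un_cv (fun _ => c) c.
Proof. intros e He; exists 0%nat; intros n _; unfold Rdist; rewrite Rminus_diag, Rabs_R0; exact He. Qed.

Lemma Un_cv_inv u L : Un_cv u L -> L <> 0 -> Un_cv (fun n => / u n) (/ L).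
Proof.
  intros Hu HL. apply (continuity_seq (fun x => / x)); [|exact Hu].
  apply (continuity_pt_inv (fun x => x)); [apply derivable_continuous_pt, derivable_pt_id|exact HL].
Qed.

Lemma Un_cv_sumL {I : Type} (l : list I) (u : nat -> I -> R) (L : I -> R) :
  (forall i, Un_cv (fun n => u n i) (L i)) -> Un_cv (fun n => sumL l (u n)) (sumL l L).
Proof. intros H; induction l; [exact (Un_cv_const 0)|apply CV_plus; auto]. Qed.

Lemma lim_seq_spec u L : Un_cv u L -> Un_cv u (lim_seq u).
Proof. intros H; unfold lim_seq; apply epsilon_spec; exists L; exact H. Qed.

Lemma lim_seq_eq u L : Un_cv u L -> lim_seq u = L.
Proof. intros H; exact (UL_sequence u _ L (lim_seq_spec u L H) H). Qed.

Lemma series_le (u : nat -> R) B :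
  (forall k, 0 <= u k) -> (forall n, sum_f_R0 u n <= B) -> series u <= B.
Proof.
  intros Hu HB.
  assert (Hgrow : Un_growing (fun n => sum_f_R0 u n)).
  { intros n; rewrite tech5; specialize (Hu (S n)); lra. }
  destruct (growing_cv _ Hgrow) as [L HL]; [exists B; intros x [n ->]; apply HB|].
  unfold series; rewrite (lim_seq_eq _ L HL).
  exact (Rle_cv_lim HB HL (Un_cv_const B)).
Qed.

Definition cv_or_infty (u : nat -> R) : Prop := (exists L, Un_cv u L) \/ cv_infty u.

Lemma cv_infty_le u v : (forall n, u n <= v n) -> cv_infty u -> cv_infty v.
Proof.
  intros Huv Hu M; destruct (Hu M) as [N0 HN0]; exists N0.
  intros n Hn; specialize (HN0 n Hn); specialize (Huv n); lra.
Qed.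

Lemma cv_or_infty_plus u v : (forall n, 0 <= u n) -> (forall n, 0 <= v n) ->
  cv_or_infty u -> cv_or_infty v -> cv_or_infty (fun n => u n + v n).
Proof.
  intros Hu Hv [[Lu Hcu]|Hiu] [[Lv Hcv]|Hiv].
  - left; exists (Lu + Lv); apply CV_plus; assumption.
  - right; apply (cv_infty_le v); [intros n; specialize (Hu n); lra|exact Hiv].
  - right; apply (cv_infty_le u); [intros n; specialize (Hv n); lra|exact Hiu].
  - right; apply (cv_infty_le u); [intros n; specialize (Hv n); lra|exact Hiu].
Qed.

Lemma cv_or_infty_sumL {I : Type} (l : list I) (u : nat -> I -> R) :
  (forall n i, 0 <= u n i) -> (forall i, cv_or_infty (fun n => u n i)) ->
  cv_or_infty (fun n => sumL l (u n)).
Proof.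
  intros Hu Hc; induction l as [|i l IH].
  - left; exists 0; exact (Un_cv_const 0).
  - apply cv_or_infty_plus; auto. intros n; apply sumL_nonneg; auto.
Qed.

Lemma cv_or_infty_inv u : (forall n, 1 <= u n) -> cv_or_infty u ->
  exists L, Un_cv (fun n => / u n) L.
Proof.
  intros Hu [[L HL]|Hinf].
  - exists (/ L); apply Un_cv_inv; [exact HL|].
    pose proof (Rle_cv_lim Hu (Un_cv_const 1) HL); lra.
  - exists 0; exact (cv_infty_cv_0 u Hinf).
Qed.

Lemma atan_le x y : x <= y -> atan x <= atan y.
Proof. intros [H| ->]; [left; apply atan_increasing, H|right; reflexivity]. Qed.

Lemma cv_or_infty_of_atan u : (forall n, 0 <= u n) ->
  (exists L, Un_cv (fun n => atan (u n)) L) -> cv_or_infty u.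
Proof.
  intros Hu [L HL]. pose proof PI2_RGT_0.
  assert (HL0 : 0 <= L).
  { refine (Rle_cv_lim _ (Un_cv_const 0) HL).
    intros n; rewrite <- atan_0; apply atan_le, Hu. }
  assert (HL1 : L <= PI / 2).
  { refine (Rle_cv_lim _ HL (Un_cv_const (PI / 2))).
    intros n; left; apply atan_bound. }
  destruct HL1 as [Hlt| ->].
  - left; exists (tan L).
    apply (Un_cv_ext (fun n => tan (atan (u n)))); [intros n; apply tan_atan|].
    apply continuity_seq; [|exact HL].
    apply derivable_continuous_pt, derivable_pt_tan; lra.
  - right; intros M.
    destruct (HL (PI / 2 - atan M)) as [N0 HN0]; [pose proof (atan_bound M); lra|].
    exists N0; intros n Hn. specialize (HN0 n Hn); unfold Rdist in HN0.
    apply Rabs_def2 in HN0.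
    destruct (Rlt_le_dec M (u n)) as [H'|H']; [exact H'|].
    apply atan_le in H'; lra.
Qed.

(** * Poisson weights *)

Definition poisson (t : R) (k : nat) : R := exp (- t) * t ^ k / INR (fact k).

Lemma exp_partial_sum_le t n : 0 <= t -> sum_f_R0 (fun k => / INR (fact k) * t ^ k) n <= exp t.
Proof.
  intros Ht; apply (growing_ineq (E1 t)); [|apply E1_cvg].
  intros m; unfold E1; rewrite tech5.
  assert (0 <= / INR (fact (S m)) * t ^ S m).
  { apply Rmult_le_pos; [left; apply Rinv_0_lt_compat, INR_fact_lt_0|apply pow_le; lra]. }
  lra.
Qed.

Lemma poisson_nonneg t k : 0 <= t -> 0 <= poisson t k.
Proof.
  intros Ht; unfold poisson, Rdiv.
  apply Rmult_le_pos; [apply Rmult_le_pos; [left; apply exp_pos|apply pow_le; lra]|].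
  left; apply Rinv_0_lt_compat, INR_fact_lt_0.
Qed.

Lemma poisson_sum_le1 t n : 0 <= t -> sum_f_R0 (poisson t) n <= 1.
Proof.
  intros Ht.
  assert (Hsum : sum_f_R0 (poisson t) n = exp (- t) * sum_f_R0 (fun k => / INR (fact k) * t ^ k) n).
  { rewrite scal_sum; apply sum_eq; intros k _; unfold poisson; field; apply INR_fact_neq_0. }
  rewrite Hsum, exp_Ropp. pose proof (exp_partial_sum_le t n Ht). pose proof (exp_pos t).
  apply (Rmult_le_reg_l (exp t)); [exact H0|]. rewrite <- Rmult_assoc, Rinv_r; lra.
Qed.

Lemma poisson_le t k : 0 < t -> poisson t k <= INR (S k) / t.
Proof.
  intros Ht.
  set (w := / INR (fact (S k)) * t ^ S k).
  assert (Hw : w <= exp t).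
  { eapply Rle_trans; [|apply (exp_partial_sum_le t (S k)); lra]. rewrite tech5.
    enough (0 <= sum_f_R0 (fun i => / INR (fact i) * t ^ i) k) by (unfold w; lra).
    apply cond_pos_sum; intros i.
    apply Rmult_le_pos; [left; apply Rinv_0_lt_compat, INR_fact_lt_0|apply pow_le; lra]. }
  assert (Hpw : poisson t k = INR (S k) / t * (w / exp t)).
  { unfold poisson, w. rewrite exp_Ropp. change (fact (S k)) with (S k * fact k)%nat.
    rewrite mult_INR. simpl pow. pose proof (exp_pos t). pose proof (INR_fact_lt_0 k).
    pose proof (lt_0_INR (S k) (Nat.lt_0_succ k)). field; lra. }
  rewrite Hpw. pose proof (exp_pos t).
  assert (0 < INR (S k) / t) by (apply Rdiv_lt_0_compat; [apply lt_0_INR; lia|exact Ht]).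
  assert (w / exp t <= 1) by (apply (Rmult_le_reg_r (exp t)); [lra|]; unfold Rdiv; rewrite Rmult_assoc, Rinv_l; lra).
  nra.
Qed.

Lemma sum_indicator_le (K : nat) d n : 0 <= d ->
  sum_f_R0 (fun k => if (k <? K)%nat then d else 0) n <= INR K * d.
Proof.
  intros Hd.
  enough (sum_f_R0 (fun k => if (k <? K)%nat then d else 0) n = INR (Nat.min (S n) K) * d)
    as -> by (apply Rmult_le_compat_r; [exact Hd|apply le_INR; lia]).
  induction n as [|n IH]; simpl sum_f_R0.
  - destruct (Nat.ltb_spec 0 K); [rewrite Nat.min_l by lia; simpl; ring|].
    replace K with 0%nat by lia; simpl; ring.
  - rewrite IH. destruct (Nat.ltb_spec (S n) K).
    + rewrite !Nat.min_l by lia. rewrite (S_INR (S n)); ring.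
    + rewrite !Nat.min_r by lia; ring.
Qed.

(* The first [K] Poisson weights are each at most [K / t]; the remaining mass is
   weighted by [a k <= a K]. *)
Lemma poisson_mixture_le t (a : nat -> R) K : 0 < t ->
  (forall k, 0 <= a k <= 1) -> (forall k, a (S k) <= a k) ->
  series (fun k => poisson t k * a k) <= INR K * INR K / t + a K.
Proof.
  intros Ht Ha Hmono.
  assert (Htail : forall k, (K <= k)%nat -> a k <= a K).
  { induction 1 as [|k _ IH]; [lra|specialize (Hmono k); lra]. }
  apply series_le; [intros k; apply Rmult_le_pos; [apply poisson_nonneg; lra|apply Ha]|intros n].
  assert (Hpt : forall k, poisson t k * a k <=
                          (if (k <? K)%nat then INR K / t else 0) + poisson t k * a K).
  { intros k. pose proof (poisson_nonneg t k ltac:(lra)). pose proof (Ha k). pose proof (Ha K).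
    destruct (Nat.ltb_spec k K) as [Hk|Hk].
    - pose proof (poisson_le t k Ht).
      assert (INR (S k) / t <= INR K / t).
      { apply Rmult_le_compat_r; [left; apply Rinv_0_lt_compat, Ht|apply le_INR; lia]. }
      nra.
    - specialize (Htail k Hk); nra. }
  eapply Rle_trans; [apply sum_Rle; intros k _; apply Hpt|].
  rewrite sum_plus, <- scal_sum.
  pose proof (sum_indicator_le K (INR K / t) n).
  pose proof (poisson_sum_le1 t n ltac:(lra)). pose proof (Ha K).
  assert (0 <= INR K / t) by (apply Rle_mult_inv_pos; [apply pos_INR|exact Ht]).
  replace (INR K * INR K / t) with (INR K * (INR K / t)) by (unfold Rdiv; ring).
  nra.
Qed.

(** * Avoidance probabilities of a Markov kernel *)

Definition stochastic {E : Type} (l : list E) (P : E -> E -> R) : Prop :=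
  (forall x y, 0 <= P x y) /\ (forall x, sumL l (P x) = 1).

Fixpoint avoid_prob {E : Type} (l : list E) (P : E -> E -> R) (A : E -> Prop)
    (k : nat) (x : E) : R :=
  match k with
  | O => 1
  | S k' => sumL l (fun y => P x y * (if dec (A y) then 0 else avoid_prob l P A k' y))
  end.

Lemma avoid_unif {E : Type} (l : list E) a Rt A k x :
  avoid l a Rt A k x = avoid_prob l (unif_kernel l a Rt) A k x.
Proof.
  revert x; induction k as [|k IH]; intros x; [reflexivity|].
  apply sumL_ext; intros y; rewrite IH; reflexivity.
Qed.

Lemma avoid_prob_cv {E : Type} (l : list E) (P : nat -> E -> E -> R) (Q : E -> E -> R) A :
  (forall x y, Un_cv (fun N => P N x y) (Q x y)) ->
  forall k x, Un_cv (fun N => avoid_prob l (P N) A k x) (avoid_prob l Q A k x).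
Proof.
  intros HPQ k; induction k as [|k IH]; intros x; [exact (Un_cv_const 1)|].
  apply Un_cv_sumL; intros y. apply CV_mult; [apply HPQ|].
  destruct (dec (A y)); [exact (Un_cv_const 0)|apply IH].
Qed.

Section Avoidance.
Context {E : Type} (l : list E) (P : E -> E -> R) (A : E -> Prop).
Hypothesis HP : stochastic l P.

Lemma avoid_prob_bounds k x : 0 <= avoid_prob l P A k x <= 1.
Proof.
  destruct HP as [Hnn Hsum]. revert x; induction k as [|k IH]; intros x; simpl; [lra|].
  split.
  - apply sumL_nonneg; intros y. specialize (Hnn x y); specialize (IH y).
    destruct (dec (A y)); nra.
  - rewrite <- (Hsum x). apply sumL_le; intros y. specialize (Hnn x y); specialize (IH y).
    destruct (dec (A y)); nra.
Qed.

Lemma avoid_prob_S_mono k k' x : (forall y, avoid_prob l P A k' y <= avoid_prob l P A k y) ->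
  avoid_prob l P A (S k') x <= avoid_prob l P A (S k) x.
Proof.
  intros Hkk'; simpl; apply sumL_le; intros y. specialize (Hkk' y). pose proof (proj1 HP x y).
  destruct (dec (A y)); nra.
Qed.

Lemma avoid_prob_S_le k x : avoid_prob l P A (S k) x <= avoid_prob l P A k x.
Proof.
  revert x; induction k as [|k IH]; intros x; [apply (avoid_prob_bounds 1)|].
  apply avoid_prob_S_mono, IH.
Qed.

Lemma avoid_prob_antitone k k' x : (k <= k')%nat ->
  avoid_prob l P A k' x <= avoid_prob l P A k x.
Proof.
  induction 1 as [|k' _ IH]; [lra|]. pose proof (avoid_prob_S_le k' x); lra.
Qed.

Lemma avoid_prob_add_le n c : (forall y, ~ A y -> avoid_prob l P A n y <= c) ->
  forall k x, ~ A x -> avoid_prob l P A (k + n) x <= avoid_prob l P A k x * c.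
Proof.
  intros Hc k; induction k as [|k IH]; intros x Hx; simpl; [rewrite Rmult_1_l; auto|].
  rewrite Rmult_comm, sumL_mult_l. apply sumL_le; intros y. pose proof (proj1 HP x y).
  destruct (dec (A y)) as [_|Hy]; [lra|]. specialize (IH y Hy); nra.
Qed.

Lemma avoid_prob_geometric n c : 0 <= c -> (forall y, ~ A y -> avoid_prob l P A n y <= c) ->
  forall j x, ~ A x -> avoid_prob l P A (j * n) x <= c ^ j.
Proof.
  intros Hc0 Hc j; induction j as [|j IH]; intros x Hx; simpl; [lra|].
  rewrite Nat.add_comm. pose proof (avoid_prob_add_le n c Hc (j * n) x Hx).
  specialize (IH x Hx). nra.
Qed.

End Avoidance.

(** * Transient states *)

Definition card_sat {E : Type} (l : list E) (P : E -> Prop) : nat :=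
  length (filter (fun w => if dec (P w) then true else false) l).

Lemma card_sat_le {E : Type} (l : list E) (P P' : E -> Prop) :
  (forall w, P w -> P' w) -> (card_sat l P <= card_sat l P')%nat.
Proof.
  intros H; unfold card_sat; induction l as [|a l IH]; simpl; [lia|].
  destruct (dec (P a)), (dec (P' a)); simpl; try lia. exfalso; auto.
Qed.

Lemma card_sat_lt {E : Type} (l : list E) (P P' : E -> Prop) w :
  (forall w, P w -> P' w) -> In w l -> P' w -> ~ P w -> (card_sat l P < card_sat l P')%nat.
Proof.
  intros H Hin H' HnP; induction l as [|a l IH]; [destruct Hin|].
  pose proof (card_sat_le l P P' H). unfold card_sat in *; simpl.
  destruct Hin as [->|Hin].
  - destruct (dec (P w)); [contradiction|]. destruct (dec (P' w)); [simpl; lia|contradiction].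
  - specialize (IH Hin). destruct (dec (P a)), (dec (P' a)); simpl; try lia. exfalso; auto.
Qed.

(* Each non-recurrent step strictly shrinks the set of reachable states. *)
Lemma reach_recurrent {E : Type} (l : list E) (Hfull : forall x, In x l) (Rt : E -> E -> R) y :
  exists z, reach Rt y z /\ recurrent Rt z.
Proof.
  remember (card_sat l (reach Rt y)) as n eqn:Hn. revert y Hn.
  induction n as [n IH] using lt_wf_ind; intros y ->.
  destruct (classic (recurrent Rt y)) as [Hy|Hy]; [exists y; split; [apply rt_refl|exact Hy]|].
  apply not_all_ex_not in Hy as [z Hz]. apply imply_to_and in Hz as [Hyz Hzy].
  destruct (IH (card_sat l (reach Rt z))) with z as [w [Hzw Hw]]; [|reflexivity|].
  - apply (card_sat_lt l _ _ y); [|apply Hfull|apply rt_refl|exact Hzy].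
    intros w Hw; exact (rt_trans _ _ _ _ _ Hyz Hw).
  - exists w; split; [exact (rt_trans _ _ _ _ _ Hyz Hzw)|exact Hw].
Qed.

Lemma reach_edge {E : Type} (Rt : E -> E -> R) x z : reach Rt x z -> x <> z ->
  exists a b, edge Rt a b.
Proof.
  induction 1 as [x y Hxy| |x y z _ IH1 _ IH2]; intros Hne; [eauto|contradiction|].
  destruct (classic (x = y)) as [->|Hxy]; auto.
Qed.

Lemma list_uniform_index {E : Type} (l : list E) (P : nat -> E -> Prop) :
  (forall j j' y, (j <= j')%nat -> P j y -> P j' y) ->
  (forall y, In y l -> exists m, P m y) -> exists n, forall y, In y l -> P n y.
Proof.
  intros Hmono; induction l as [|a l IH]; intros H; [exists 0%nat; intros y []|].
  destruct (H a (or_introl eq_refl)) as [m Hm].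
  destruct IH as [n Hn]; [intros y Hy; apply H; right; exact Hy|].
  exists (Nat.max m n); intros y [<-|Hy].
  - apply (Hmono m); [lia|exact Hm].
  - apply (Hmono n); [lia|apply Hn; exact Hy].
Qed.

Lemma list_max_lt1 {E : Type} (l : list E) (g : E -> R) (B : E -> Prop) :
  (forall y, In y l -> B y -> g y < 1) ->
  exists c, 0 <= c < 1 /\ forall y, In y l -> B y -> g y <= c.
Proof.
  induction l as [|a l IH]; intros H; [exists 0; split; [lra|intros y []]|].
  destruct IH as [c [Hc Hmax]]; [intros y Hy; apply H; right; exact Hy|].
  destruct (classic (B a)) as [Ha|Ha].
  - pose proof (H a (or_introl eq_refl) Ha).
    exists (Rmax c (g a)); split; [split; [apply Rle_trans with c; [lra|apply Rmax_l]|
                                            apply Rmax_lub_lt; lra]|].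
    intros y [<-|Hy] Hy'; [apply Rmax_r|apply Rle_trans with c; [auto|apply Rmax_l]].
  - exists c; split; [exact Hc|]. intros y [<-|Hy] Hy'; [contradiction|auto].
Qed.

Section Transient.
Context {E : Type} (l : list E) (Hfull : forall x, In x l).
Variables (Rt Q : E -> E -> R).
Hypothesis HQ : stochastic l Q.
Hypothesis HQR : forall x y, x <> y -> Q x y = Rt x y.

Lemma avoid_prob_S_lt1 A x y k : 0 < Q x y ->
  (if dec (A y) then 0 else avoid_prob l Q A k y) < 1 -> avoid_prob l Q A (S k) x < 1.
Proof.
  intros Hxy Hy. destruct HQ as [Hnn Hsum]. rewrite <- (Hsum x).
  apply (sumL_weighted_lt l (Q x) (fun z => if dec (A z) then 0 else avoid_prob l Q A k z) y);
    auto.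
  intros z; destruct (dec (A z)); [lra|apply (avoid_prob_bounds l Q A HQ)].
Qed.

Lemma transient_avoid_lt1 y : ~ recurrent Rt y ->
  exists m, avoid_prob l Q (recurrent Rt) m y < 1.
Proof.
  intros Hy. destruct (reach_recurrent l Hfull Rt y) as [z [Hyz Hz]].
  enough (recurrent Rt y \/ exists m, avoid_prob l Q (recurrent Rt) m y < 1) by tauto.
  clear Hy; apply clos_rt_rt1n in Hyz.
  induction Hyz as [|x y' z [Hxy' Hpos] _ IH]; [left; exact Hz|].
  destruct (classic (recurrent Rt x)) as [Hx|Hx]; [left; exact Hx|right].
  assert (Hstep : exists m,
    (if dec (recurrent Rt y') then 0 else avoid_prob l Q (recurrent Rt) m y') < 1).
  { destruct (IH Hz) as [Hy'|[m Hm]]; [exists 0%nat|exists m];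
      destruct (dec (recurrent Rt y')); (lra || contradiction). }
  destruct Hstep as [m Hm]. exists (S m).
  apply (avoid_prob_S_lt1 _ x y'); [rewrite HQR; auto|exact Hm].
Qed.

(* From a transient state, a recurrent state is reached within [n] steps with probability at
   least [1 - c] uniformly, so avoiding them for [j * n] steps has probability at most [c ^ j]. *)
Lemma avoid_recurrent_small y e : ~ recurrent Rt y -> 0 < e ->
  exists K, avoid_prob l Q (recurrent Rt) K y < e.
Proof.
  intros Hy He. set (A := recurrent Rt).
  destruct (list_uniform_index l (fun j z => ~ A z -> avoid_prob l Q A j z < 1)) as [n Hn].
  - intros j j' z Hj Hlt Hz. eapply Rle_lt_trans; [apply (avoid_prob_antitone l Q A HQ j j' z Hj)|].
    exact (Hlt Hz).
  - intros z _. destruct (classic (A z)) as [Hz|Hz]; [exists 0%nat; tauto|].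
    destruct (transient_avoid_lt1 z Hz) as [m Hm]; exists m; auto.
  - destruct (list_max_lt1 l (avoid_prob l Q A n) (fun z => ~ A z)) as [c [Hc Hmax]];
      [exact Hn|].
    destruct (pow_lt_1_zero c ltac:(rewrite Rabs_right; lra) e He) as [J HJ].
    exists (J * n)%nat.
    eapply Rle_lt_trans; [apply (avoid_prob_geometric l Q A HQ n c); auto; lra|].
    apply Rle_lt_trans with (Rabs (c ^ J)); [apply Rle_abs|apply HJ; lia].
Qed.

End Transient.

(** * Rates under Assumption A *)

Section Rates.
Context {E : Type} (l : list E) (Hnd : NoDup l) (Hfull : forall x, In x l).

Lemma unif_kernel_stochastic a (Rt : E -> E -> R) :
  (forall x y, x <> y -> 0 <= Rt x y) -> 0 <= a -> (forall x, a * off_sum l x (Rt x) <= 1) ->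
  stochastic l (unif_kernel l a Rt).
Proof.
  intros Hnn Ha Hoff; split.
  - intros x y; unfold unif_kernel; destruct (dec (y = x)) as [_|Hyx].
    + specialize (Hoff x); lra.
    + apply Rmult_le_pos; auto.
  - intros x. transitivity (sumL l (fun y => (if dec (y = x) then 1 - a * off_sum l x (Rt x) else 0)
                                            + a * (if dec (y = x) then 0 else Rt x y))).
    { apply sumL_ext; intros y; unfold unif_kernel; destruct (dec (y = x)); ring. }
    rewrite sumL_plus, <- sumL_mult_l, (sumL_single l _ x Hnd (Hfull x)).
    + destruct (dec (x = x)); [unfold off_sum; ring|contradiction].
    + intros y Hyx; destruct (dec (y = x)); [contradiction|reflexivity].
Qed.

Lemma total_rate_div (Rt : E -> E -> R) c :
  total_rate l Rt / c = sumL l (fun a => off_sum l a (fun b => Rt a b / c)).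
Proof.
  unfold total_rate, Rdiv; rewrite Rmult_comm, sumL_mult_l. apply sumL_ext; intros a.
  unfold off_sum; rewrite sumL_mult_l. apply sumL_ext; intros b.
  destruct (dec (b = a)); ring.
Qed.

Variable RN : nat -> E -> E -> R.
Hypothesis Hnonneg : forall N x y, x <> y -> 0 <= RN N x y.

Lemma off_sum_nonneg N x : 0 <= off_sum l x (RN N x).
Proof.
  apply sumL_nonneg; intros y; destruct (dec (y = x)); [lra|auto].
Qed.

Lemma off_sum_le_total N x : off_sum l x (RN N x) <= total_rate l (RN N).
Proof.
  apply (sumL_term l (fun a => off_sum l a (RN N a))); [apply off_sum_nonneg|apply Hfull].
Qed.

Lemma rate_le_total N x y : x <> y -> RN N x y <= total_rate l (RN N).
Proof.
  intros Hxy; eapply Rle_trans; [|apply (off_sum_le_total N x)].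
  unfold off_sum; refine (Rle_trans _ _ _ _ (sumL_term l _ y _ (Hfull y))).
  - destruct (dec (y = x)); [congruence|lra].
  - intros z; destruct (dec (z = x)); [lra|auto].
Qed.

Lemma alpha_nonneg N : 0 <= alpha l RN N.
Proof.
  unfold alpha. assert (0 <= total_rate l (RN N)) by apply sumL_nonneg, off_sum_nonneg.
  destruct (Req_dec (total_rate l (RN N)) 0) as [Hz|Hne]; [rewrite Hz, Rinv_0; lra|].
  left; apply Rinv_0_lt_compat; lra.
Qed.

(* When the total rate vanishes, [alpha] is [/ 0 = 0]. *)
Lemma alpha_off_sum_le1 N x : alpha l RN N * off_sum l x (RN N x) <= 1.
Proof.
  pose proof (off_sum_nonneg N x). pose proof (off_sum_le_total N x). unfold alpha.
  destruct (Req_dec (total_rate l (RN N)) 0) as [Hz|Hne]; [rewrite Hz, Rinv_0; lra|].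
  apply (Rmult_le_reg_l (total_rate l (RN N))); [lra|].
  rewrite <- Rmult_assoc, Rinv_r; lra.
Qed.

Lemma alpha_pos N (x y : E) : irreducible (RN N) -> x <> y -> 0 < alpha l RN N.
Proof.
  intros Hirr Hxy. destruct (reach_edge (RN N) x y (Hirr x y) Hxy) as [a [b [Hab Hpos]]].
  pose proof (rate_le_total N a b Hab). unfold alpha; apply Rinv_0_lt_compat; lra.
Qed.

Lemma unif_kernel_alpha_stochastic N : stochastic l (unif_kernel l (alpha l RN N) (RN N)).
Proof.
  apply unif_kernel_stochastic; [auto|apply alpha_nonneg|apply alpha_off_sum_le1].
Qed.

Definition edge_exponent (x y : E) : E -> E -> nat :=
  fun a b => if dec (a = x /\ b = y) then 1%nat else 0%nat.

Lemma admissible_edge_exponent x y : x <> y -> (forall N, 0 < RN N x y) ->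
  admissible l RN 1 (edge_exponent x y).
Proof.
  intros Hxy Hpos; split.
  - intros a b; unfold edge_exponent.
    destruct (dec (a = x /\ b = y)) as [[-> ->]|]; [auto|contradiction].
  - rewrite (sumN_single l _ x Hnd (Hfull x)).
    + rewrite (sumN_single l _ y Hnd (Hfull y)).
      * destruct (dec (y = x)); [congruence|]. unfold edge_exponent.
        destruct (dec (x = x /\ y = y)); tauto.
      * intros b Hb; destruct (dec (b = x)); [reflexivity|]. unfold edge_exponent.
        destruct (dec (x = x /\ b = y)); [tauto|reflexivity].
    + intros a Ha; apply sumN_zero; intros b; destruct (dec (b = a)); [reflexivity|].
      unfold edge_exponent; destruct (dec (a = x /\ b = y)); [tauto|reflexivity].
Qed.

Lemma monomial_edge_exponent (Rt : E -> E -> R) x y : x <> y ->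
  monomial l Rt (edge_exponent x y) = Rt x y.
Proof.
  intros Hxy; unfold monomial. rewrite (prodL_single l _ x Hnd (Hfull x)).
  - rewrite (prodL_single l _ y Hnd (Hfull y)).
    + destruct (dec (y = x)); [congruence|]. unfold edge_exponent.
      destruct (dec (x = x /\ y = y)); [simpl; ring|tauto].
    + intros b Hb; destruct (dec (b = x)); [reflexivity|]. unfold edge_exponent.
      destruct (dec (x = x /\ b = y)); [tauto|reflexivity].
  - intros a Ha; apply prodL_one; intros b; destruct (dec (b = a)); [reflexivity|].
    unfold edge_exponent; destruct (dec (a = x /\ b = y)); [tauto|reflexivity].
Qed.

Lemma edge_exponent_inj a b x y : edge_exponent a b = edge_exponent x y -> a = x /\ b = y.
Proof.
  intros Heq. pose proof (f_equal (fun k => k a b) Heq) as Hab; simpl in Hab.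
  unfold edge_exponent in Hab.
  destruct (dec (a = a /\ b = b)); [|tauto]. destruct (dec (a = x /\ b = y)); [auto|discriminate].
Qed.

Hypothesis HA : assumptionA l RN.

(* Assumption A applied to single-edge monomials. *)
Lemma rate_ratio_cv_or_infty x y a b : x <> y -> (forall N, 0 < RN N x y) -> a <> b ->
  cv_or_infty (fun N => RN N a b / RN N x y).
Proof.
  intros Hxy Hpos Hab. destruct HA as [Hdich Hord].
  destruct (Hdich a b Hab) as [Hzero|Hpab].
  { left; exists 0. apply (Un_cv_ext (fun _ => 0)); [|exact (Un_cv_const 0)].
    intros N; rewrite Hzero; unfold Rdiv; ring. }
  destruct (classic (a = x /\ b = y)) as [[-> ->]|Hne].
  { left; exists 1. apply (Un_cv_ext (fun _ => 1)); [|exact (Un_cv_const 1)].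
    intros N; specialize (Hpos N); field; lra. }
  apply cv_or_infty_of_atan.
  { intros N; specialize (Hpos N); specialize (Hpab N).
    left; apply Rdiv_lt_0_compat; assumption. }
  destruct (Hord 1%nat (le_n 1) (edge_exponent a b) (edge_exponent x y)) as [L HL].
  - apply admissible_edge_exponent; assumption.
  - apply admissible_edge_exponent; assumption.
  - intros Heq; exact (Hne (edge_exponent_inj a b x y Heq)).
  - exists L. revert HL; apply Un_cv_ext; intros N.
    rewrite !monomial_edge_exponent by assumption; reflexivity.
Qed.

(* [alpha_N R_N(x, y)] is the inverse of the sum of all ratios [R_N(a, b) / R_N(x, y)],
   a sum which is at least [1] and has a limit in [1, +oo]. *)
Lemma alpha_rate_cv x y : x <> y -> exists L, Un_cv (fun N => alpha l RN N * RN N x y) L.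
Proof.
  intros Hxy. destruct (proj1 HA x y Hxy) as [Hzero|Hpos].
  { exists 0. apply (Un_cv_ext (fun _ => 0)); [|exact (Un_cv_const 0)].
    intros N; rewrite Hzero; ring. }
  set (ratios := fun N => sumL l (fun a => off_sum l a (fun b => RN N a b / RN N x y))).
  assert (Hinv : forall N, alpha l RN N * RN N x y = / ratios N).
  { intros N; unfold ratios; rewrite <- total_rate_div; unfold alpha.
    pose proof (Hpos N). pose proof (rate_le_total N x y Hxy). field; lra. }
  destruct (cv_or_infty_inv ratios) as [L HL].
  - intros N; unfold ratios; rewrite <- total_rate_div.
    pose proof (Hpos N). pose proof (rate_le_total N x y Hxy).
    apply (Rmult_le_reg_r (RN N x y)); [lra|]. unfold Rdiv; rewrite Rmult_assoc, Rinv_l; lra.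
  - apply cv_or_infty_sumL.
    + intros N a; apply sumL_nonneg; intros b; destruct (dec (b = a)); [lra|].
      pose proof (Hpos N). apply Rle_mult_inv_pos; auto.
    + intros a; apply cv_or_infty_sumL.
      * intros N b; destruct (dec (b = a)); [lra|].
        pose proof (Hpos N). apply Rle_mult_inv_pos; auto.
      * intros b; destruct (dec (b = a)) as [_|Hba].
        -- left; exists 0; exact (Un_cv_const 0).
        -- apply rate_ratio_cv_or_infty; auto.
  - exists L. revert HL; apply Un_cv_ext; intros N; rewrite Hinv; reflexivity.
Qed.

Lemma alpha_rate_limit x y : x <> y ->
  Un_cv (fun N => alpha l RN N * RN N x y) (limit_rate l RN x y).
Proof.
  intros Hxy; destruct (alpha_rate_cv x y Hxy) as [L HL]; exact (lim_seq_spec _ L HL).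
Qed.

Lemma limit_rate_nonneg x y : x <> y -> 0 <= limit_rate l RN x y.
Proof.
  intros Hxy; refine (Rle_cv_lim _ (Un_cv_const 0) (alpha_rate_limit x y Hxy)).
  intros N; apply Rmult_le_pos; [apply alpha_nonneg|auto].
Qed.

Lemma alpha_off_sum_limit x :
  Un_cv (fun N => alpha l RN N * off_sum l x (RN N x)) (off_sum l x (limit_rate l RN x)).
Proof.
  apply (Un_cv_ext (fun N => off_sum l x (fun y => alpha l RN N * RN N x y))).
  { intros N; unfold off_sum; rewrite sumL_mult_l; apply sumL_ext; intros y.
    destruct (dec (y = x)); ring. }
  apply Un_cv_sumL; intros y; destruct (dec (y = x)) as [_|Hyx].
  - exact (Un_cv_const 0).
  - apply alpha_rate_limit; auto.
Qed.

Lemma unif_kernel_alpha_limit x y :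
  Un_cv (fun N => unif_kernel l (alpha l RN N) (RN N) x y) (unif_kernel l 1 (limit_rate l RN) x y).
Proof.
  unfold unif_kernel; destruct (dec (y = x)) as [_|Hyx]; rewrite Rmult_1_l.
  - apply CV_minus; [exact (Un_cv_const 1)|apply alpha_off_sum_limit].
  - apply alpha_rate_limit; auto.
Qed.

Lemma limit_kernel_stochastic : stochastic l (unif_kernel l 1 (limit_rate l RN)).
Proof.
  apply unif_kernel_stochastic; [apply limit_rate_nonneg|lra|intros x; rewrite Rmult_1_l].
  exact (Rle_cv_lim (fun N => alpha_off_sum_le1 N x) (alpha_off_sum_limit x) (Un_cv_const 1)).
Qed.

End Rates.

Lemma hit_tail_uniformized {E : Type} (l : list E) a Rt A eta t : 0 < a ->
  hit_tail l a Rt A eta (t * a) =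
  series (fun k => poisson t k * avoid l a Rt A k eta).
Proof. intros Ha; unfold hit_tail; replace (t * a / a) with t by (field; lra); reflexivity. Qed.

Theorem mainTheorem16 (E : Type) (enum : list E)
  (Hnodup : NoDup enum) (Hfull : forall x : E, In x enum)
  (RN : nat -> E -> E -> R)
  (Hnonneg : forall N eta xi, eta <> xi -> 0 <= RN N eta xi)
  (Hirr : forall N, irreducible (RN N))
  (HA : assumptionA enum RN) :
  forall eta : E, ~ recurrent (limit_rate enum RN) eta ->
  forall eps : R, 0 < eps ->
  exists T : R, forall t : R, T <= t ->
    exists N0 : nat, forall N : nat, (N0 <= N)%nat ->
      hit_tail enum (alpha enum RN N) (RN N) (recurrent (limit_rate enum RN))
               eta (t * alpha enum RN N) <= eps.
Proof.
  intros eta Heta eps Heps.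
  set (Rl := limit_rate enum RN) in *. set (Q := unif_kernel enum 1 Rl).
  set (P := fun N => unif_kernel enum (alpha enum RN N) (RN N)).
  assert (HQ : stochastic enum Q) by (apply limit_kernel_stochastic; auto).
  assert (HQR : forall x y, x <> y -> Q x y = Rl x y).
  { intros x y Hxy; unfold Q, unif_kernel; destruct (dec (y = x)); [congruence|ring]. }
  destruct (avoid_recurrent_small enum Hfull Rl Q HQ HQR eta (eps / 4) Heta) as [K HK]; [lra|].
  destruct (avoid_prob_cv enum P Q (recurrent Rl) (unif_kernel_alpha_limit enum Hnodup Hfull RN
             Hnonneg HA) K eta (eps / 4)) as [N0 HN0]; [lra|].
  exists (2 * INR K * INR K / eps + 1); intros t Ht; exists N0; intros N HN.
  assert (Hpow : 0 <= 2 * INR K * INR K / eps).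
  { apply Rle_mult_inv_pos; [pose proof (pos_INR K); nra|exact Heps]. }
  assert (Halpha : 0 < alpha enum RN N).
  { apply not_all_ex_not in Heta as [z Hz].
    apply (alpha_pos enum Hfull RN Hnonneg N eta z (Hirr N)); intros <-.
    apply Hz; intros _; apply rt_refl. }
  rewrite hit_tail_uniformized by exact Halpha.
  eapply Rle_trans; [apply (poisson_mixture_le t _ K); [lra|..]|].
  - intros k; rewrite avoid_unif; apply avoid_prob_bounds, unif_kernel_alpha_stochastic; auto.
  - intros k; rewrite !avoid_unif; apply avoid_prob_S_le, unif_kernel_alpha_stochastic; auto.
  - cbv beta; rewrite avoid_unif; fold (P N).
    specialize (HN0 N HN); unfold Rdist in HN0; apply Rabs_def2 in HN0.
    assert (INR K * INR K / t <= eps / 2).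
    { apply (Rmult_le_reg_r t); [lra|]. unfold Rdiv in *; rewrite Rmult_assoc, Rinv_l by lra.
      assert (eps * (2 * INR K * INR K * / eps) = 2 * INR K * INR K) by (field; lra). nra. }
    lra.
Qed.
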